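(* Let $A \in \mathbb{R}^{n\times n}$ and let $Q, D \in \mathbb{R}^{n\times n}$ be symmetric. Assume that the pair $(A,D)$ is stabilizable and the pair $(Q,A)$ is detectable, and let $P$ be the unique stabilizing solution of the algebraic Riccati equation $A^T X + XA + Q - XDX = 0$. Let $$H = \begin{bmatrix} A & -D \\ -Q & -A^T\end{bmatrix}\in\mathbb{R}^{2n\times 2n},\qquad J=\begin{bmatrix}\mathbf{0}_n & I_n\\ -I_n & \mathbf{0}_n\end{bmatrix},$$ and let $(\lambda_i, v_i)$ be a right eigenpair of $H$ with $\lambda_i<0$ real and $v_i\in\mathbb{R}^{2n}$ a unit vector ($Hv_i=\lambda_i v_i$, $\|v_i\|=1$). Define $p_i = (J + I_{2n}) v_i$ and $q_i = J v_i$. Then for any $\Delta\lambda_i \in \mathbb{R}$ there exist $\tilde A \in \mathbb{R}^{n\times n}$ and symmetric $\tilde Q, \tilde D \in \mathbb{R}^{n\times n}$ such that $$H + \Delta\lambda_i\left(v_i p_i^T - q_i q_i^T\right) = \begin{bmatrix} \tilde A & -\tilde D \\ -\tilde Q & -\tilde A^T\end{bmatrix}.$$ Moreover, if $\Delta\lambda_i < -\lambda_i$, then $P$ is the unique stabilizing solution of $\tilde A^T X + X\tilde A + \tilde Q - X\tilde D X = 0$.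
   Context: A solution $X$ of the algebraic Riccati equation $A^TX+XA+Q-XDX=0$ is called stabilizing if $A - DX$ is Hurwitz (all eigenvalues have negative real part); a stabilizing solution, if it exists, is unique (and symmetric). Under the stabilizability/detectability assumption such a solution exists. A right eigenpair $(\lambda,v)$ of a matrix $M$ means $Mv=\lambda v$ with $v\neq 0$. *)

From HB Require Import structures.
From mathcomp Require Import all_boot all_order all_algebra.
From mathcomp Require Import reals complex.
Set Implicit Arguments. Unset Strict Implicit. Unset Printing Implicit Defensive.
Import Order.TTheory GRing.Theory Num.Theory.
Local Open Scope ring_scope.

Definition cmx (R : realType) m k (M : 'M[R]_(m, k)) : 'M[R[i]]_(m, k) :=
  map_mx (fun x => (x%:C)%C) M.

Definition hurwitz (R : realType) n (M : 'M[R]_n) : Prop :=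
  forall (lam : R[i]) (v : 'cV[R[i]]_n),
    v != 0 -> cmx M *m v = lam *: v -> Re lam < 0.

Definition stabilizable (R : realType) n m (A : 'M[R]_n) (B : 'M[R]_(n, m)) : Prop :=
  exists K : 'M[R]_(m, n), hurwitz (A + B *m K).

Definition detectable (R : realType) n p (C : 'M[R]_(p, n)) (A : 'M[R]_n) : Prop :=
  stabilizable A^T C^T.

Definition sym_mx (R : realType) n (M : 'M[R]_n) : Prop := M^T = M.

Definition are_solution (R : realType) n (A Q D X : 'M[R]_n) : Prop :=
  A^T *m X + X *m A + Q - X *m D *m X = 0.

Definition stabilizing_solution (R : realType) n (A Q D X : 'M[R]_n) : Prop :=
  are_solution A Q D X /\ hurwitz (A - D *m X).

Definition unique_stabilizing_solution (R : realType) n (A Q D X : 'M[R]_n) : Prop :=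
  stabilizing_solution A Q D X /\
  forall Y, stabilizing_solution A Q D Y -> Y = X.

Definition hamiltonian (R : realType) n (A Q D : 'M[R]_n) : 'M[R]_(n + n) :=
  block_mx A (- D) (- Q) (- A^T).

Definition Jmx (R : realType) n : 'M[R]_(n + n) :=
  block_mx 0 1%:M (- 1%:M) 0.

Definition enorm (R : realType) k (v : 'cV[R]_k) : R :=
  Num.sqrt (\sum_(j < k) v j 0 ^+ 2).

(* A stabilizing solution X of the Riccati equation is the same as an
   H-invariant graph col(I, X) on which H acts by the Hurwitz matrix A - D X.
   By Sylvester's theorem every eigenvector of H for a negative eigenvalue
   lies on the graph of P, so v = col(x, P x) with (A - D P) x = lam x.
   The update W = v p^T - q q^T is Hamiltonian (J W = q q^T + q v^T + v q^T
   is symmetric), and q^T vanishes on the graph of the symmetric P, so that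
   graph stays invariant under H + dlam W, now with A - D P replaced by the
   rank-one update A - D P + dlam x u, where u x = p^T v = 1.  By Brauer's
   theorem this only moves lam to lam + dlam < 0, so P is still stabilizing,
   and stabilizing solutions are unique.  Stabilizability and detectability
   only serve to provide P, which the hypothesis on P already does. *)

From HB Require Import structures.
From mathcomp Require Import all_boot all_order all_algebra.
From mathcomp Require Import reals complex.
From mathcomp Require Import lra ring.
Import Order.TTheory GRing.Theory Num.Theory.
Set Implicit Arguments. Unset Strict Implicit. Unset Printing Implicit Defensive.
Local Open Scope ring_scope.

Lemma char_poly_trmx (R : comNzRingType) n (A : 'M[R]_n) :
  char_poly A^T = char_poly A.
Proof.
rewrite /char_poly -[RHS]det_tr; congr (\det _).
by rewrite /char_poly_mx linearB /= tr_scalar_mx map_trmx.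
Qed.

Lemma eigenvalue_trmx (F : fieldType) n (A : 'M[F]_n) a :
  eigenvalue A^T a = eigenvalue A a.
Proof. by rewrite !eigenvalue_root_char char_poly_trmx. Qed.

Lemma sylvester_eq0 (F : closedFieldType) n m (K : 'M[F]_n) (L : 'M[F]_m)
    (Z : 'M[F]_(n, m)) :
  (forall a, eigenvalue K a -> ~~ eigenvalue L a) -> K *m Z = Z *m L -> Z = 0.
Proof.
case: n K Z => [|n] K Z; first by move=> *; apply/matrixP => -[].
case: m L Z => [|m] L Z; first by move=> *; apply/matrixP => ? -[].
move=> disjoint KZ.
have hornerZ : forall p, horner_mx K p *m Z = Z *m horner_mx L p.
  elim/poly_ind => [|p c IHp]; first by rewrite !rmorph0 mul0mx mulmx0.
  rewrite !rmorphD !rmorphM /= !horner_mx_X !horner_mx_C -!mulmxE.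
  by rewrite mulmxDl mulmxDr scalar_mxC -mulmxA KZ mulmxA IHp -!mulmxA.
have [rs charK] := closed_field_poly_normal (char_poly K).
rewrite (monicP (char_poly_monic K)) scale1r in charK.
suff unitL : horner_mx L (char_poly K) \in unitmx.
  by rewrite -(mulmxK unitL Z) -hornerZ Cayley_Hamilton !mul0mx.
rewrite charK rmorph_prod big_seq.
apply: (big_ind (fun M => M \in unitmx)) => [|M N|r r_rs].
- exact: unitmx1.
- by rewrite -mulmxE unitmx_mul => -> ->.
have eigK : eigenvalue K r by rewrite eigenvalue_root_char charK root_prod_XsubC.
rewrite rmorphB /= horner_mx_X horner_mx_C unitmxE unitfE.
apply: contra (disjoint r eigK) => /det0P[w w0 /eqP].
rewrite mulmxBr mul_mx_scalar subr_eq0 => /eqP wL.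
by apply/eigenvalueP; exists w.
Qed.

Lemma eigenvector_rank1_update (F : fieldType) n (K : 'M[F]_n) (x : 'cV_n)
    (u : 'rV_n) (lam d mu : F) (w : 'cV_n) :
  K *m x = lam *: x -> u *m x = 1%:M ->
  w != 0 -> (K + d *: (x *m u)) *m w = mu *: w ->
  mu = lam + d \/ exists2 w' : 'cV_n, w' != 0 & K *m w' = mu *: w'.
Proof.
move=> Kx ux w0 Kw.
have x0 : x != 0.
  by apply: contra_eq_neq ux => ->; rewrite mulmx0 idmxE eq_sym oner_neq0.
have [-> | mu_lam] := eqVneq mu lam; first by right; exists x.
set c := (u *m w) 0 0.
have Kw' : K *m w = mu *: w - (d * c) *: x.
  by rewrite -Kw mulmxDl -scalemxAl -mulmxA [u *m w]mx11_scalar mul_mx_scalar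
             scalerA addrK.
(* Unless [w] is a multiple of [x], [w - a *: x] is an eigenvector of [K] for [mu]. *)
set a := d * c / (mu - lam).
have [wx | w'0] := eqVneq (w - a *: x) 0; last first.
  right; exists (w - a *: x) => //.
  rewrite mulmxBr -scalemxAr Kx Kw' scalerBr !scalerA -addrA; congr (_ + _).
  rewrite -opprD -scalerDl; congr (- (_ *: _)).
  by rewrite /a; field; rewrite subr_eq0.
left; move/eqP: wx; rewrite subr_eq0 => /eqP wx.
have ca : c = a by rewrite /c wx -scalemxAr ux !mxE /= mulr1.
have a0 : a != 0 by apply: contra_neq w0 => a0; rewrite wx a0 scale0r.
move: Kw'; rewrite wx -scalemxAr Kx ca !scalerA -scalerBl.
move/eqP; rewrite -subr_eq0 -scalerBl scaler_eq0 (negPf x0) orbF subr_eq0.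
by move=> /eqP alam; apply: (mulIf a0); rewrite mulrDl [lam * a]mulrC alam subrK.
Qed.

Section Hurwitz.
Variable R : realType.

Lemma Re_realC_lt0 (x : R) : ('Re (x%:C)%C < 0) = (x < 0).
Proof. by rewrite -complexRe ltcE /= eqxx. Qed.

Lemma cmx_eq0 m k (M : 'M[R]_(m, k)) : (cmx M == 0) = (M == 0).
Proof. exact: map_mx_eq0. Qed.

Lemma hurwitz_eigenvalue n (M : 'M[R]_n) a :
  hurwitz M -> eigenvalue (cmx M) a -> 'Re a < 0.
Proof.
move=> hM; rewrite -eigenvalue_trmx => /eigenvalueP[w wM w0].
apply: (hM a w^T); first by rewrite trmx_eq0.
by rewrite -[cmx M]trmxK -trmx_mul wM linearZ.
Qed.

Lemma hurwitz_sylvester_eq0 n m (M : 'M[R]_n) (N : 'M[R]_m) (Z : 'M[R]_(n, m)) :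
  hurwitz M -> hurwitz N -> M^T *m Z + Z *m N = 0 -> Z = 0.
Proof.
move=> hM hN MZN; apply/eqP; rewrite -cmx_eq0; apply/eqP.
apply: (@sylvester_eq0 _ _ _ (cmx M)^T (- cmx N)).
  move=> a; rewrite eigenvalue_trmx => /(hurwitz_eigenvalue hM) Ma.
  apply/negP => /eigenvalueP[w wN w0].
  have : 'Re (- a) < 0.
    apply: (hurwitz_eigenvalue hN); apply/eigenvalueP; exists w => //.
    by rewrite scaleNr -wN mulmxN opprK.
  by rewrite raddfN oppr_lt0 => /(lt_trans Ma); rewrite ltxx.
apply/eqP; rewrite mulmxN -subr_eq0 opprK /cmx map_trmx -!map_mxM -map_mxD.
by rewrite MZN map_mx0.
Qed.

Lemma hurwitz_scalar (lam : R) : lam < 0 -> hurwitz (lam%:M : 'M_1).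
Proof.
move=> lam_neg mu w w0; rewrite /cmx map_scalar_mx mul_scalar_mx => /eqP.
rewrite -subr_eq0 -scalerBl scaler_eq0 (negPf w0) orbF subr_eq0 => /eqP <-.
by rewrite Re_realC_lt0.
Qed.

Lemma hurwitz_rank1_update n (M : 'M[R]_n) (x : 'cV_n) (u : 'rV_n) (lam d : R) :
  hurwitz M -> M *m x = lam *: x -> u *m x = 1%:M -> lam + d < 0 ->
  hurwitz (M + d *: (x *m u)).
Proof.
move=> hM Mx ux lamd_neg mu w w0; rewrite /cmx map_mxD map_mxZ map_mxM => Mw.
have [||->|[w' w'0 Mw']] :=
  eigenvector_rank1_update (lam := (lam%:C)%C) _ _ w0 Mw.
- by rewrite -map_mxM Mx map_mxZ.
- by rewrite -map_mxM ux map_mx1.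
- by rewrite -rmorphD Re_realC_lt0.
- exact: hM w'0 Mw'.
Qed.

End Hurwitz.

Ltac mx_linear :=
  rewrite ?mulmxA;
  repeat match goal with
    |- context [?a *m ?b] => let t := fresh "t" in set t := a *m b; clearbody t
  end;
  apply/matrixP => i j; rewrite !mxE; lra.

Section Riccati.
Variables (R : realType) (n : nat).
Implicit Types A Q D X Y : 'M[R]_n.

Definition riccati A Q D X := A^T *m X + X *m A + Q - X *m D *m X.

Lemma riccati_trmx A Q D X : sym_mx Q -> sym_mx D ->
  (riccati A Q D X)^T = riccati A Q D X^T.
Proof.
move=> sQ sD; rewrite /riccati !(linearD, linearN) /= !trmx_mul trmxK sQ sD.
by mx_linear.
Qed.

Lemma riccati_subr A Q D X Y : sym_mx D ->
  (A - D *m Y^T)^T *m (X - Y) + (X - Y) *m (A - D *m X) =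
  riccati A Q D X - riccati A Q D Y.
Proof.
move=> sD; rewrite /riccati [(A - _)^T]linearB /= trmx_mul trmxK sD.
rewrite !(mulmxBl, mulmxBr); by mx_linear.
Qed.

Lemma stabilizing_solution_sym A Q D X : sym_mx Q -> sym_mx D ->
  stabilizing_solution A Q D X -> sym_mx X.
Proof.
move=> sQ sD [ricX hurX]; apply/esym/eqP; rewrite -subr_eq0; apply/eqP.
apply: (hurwitz_sylvester_eq0 hurX hurX).
have := @riccati_subr A Q D X X^T sD; rewrite trmxK => ->.
by rewrite -riccati_trmx // [riccati _ _ _ _]ricX trmx0 subrr.
Qed.

Lemma stabilizing_solution_unique A Q D X Y : sym_mx Q -> sym_mx D ->
  stabilizing_solution A Q D X -> stabilizing_solution A Q D Y -> X = Y.
Proof.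
move=> sQ sD stabX stabY; have sY := stabilizing_solution_sym sQ sD stabY.
case: stabX stabY => ricX hurX [ricY hurY]; apply/eqP; rewrite -subr_eq0; apply/eqP.
apply: (hurwitz_sylvester_eq0 hurY hurX).
have := @riccati_subr A Q D X Y sD; rewrite sY => ->.
by rewrite [riccati _ _ _ X]ricX [riccati _ _ _ Y]ricY subrr.
Qed.

Lemma hamiltonian_graph A Q D X :
  hamiltonian A Q D *m col_mx 1%:M X =
  col_mx 1%:M X *m (A - D *m X) - col_mx 0 (riccati A Q D X).
Proof.
rewrite /hamiltonian mul_block_col mul_col_mx opp_col_mx add_col_mx.
rewrite /riccati !mulmx1 mul1mx subr0 !mulNmx mulmxBr.
by congr (col_mx _ _); mx_linear.
Qed.

Lemma graph_invariant_solution A Q D X (M : 'M[R]_n) :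
  hamiltonian A Q D *m col_mx 1%:M X = col_mx 1%:M X *m M ->
  are_solution A Q D X /\ A - D *m X = M.
Proof.
rewrite hamiltonian_graph !mul_col_mx !mul1mx opp_col_mx add_col_mx subr0.
move=> /eq_col_mx[AM]; rewrite AM => /(canRL (addKr _)).
by rewrite addNr => /eqP; rewrite oppr_eq0 => /eqP.
Qed.

Lemma hamiltonian_left_graph A Q D X : sym_mx D -> sym_mx X ->
  row_mx (- X) 1%:M *m hamiltonian A Q D =
  - ((A - D *m X)^T *m row_mx (- X) 1%:M + row_mx (riccati A Q D X) 0).
Proof.
move=> sD sX; rewrite /hamiltonian mul_row_block mul_mx_row add_row_mx opp_row_mx.
rewrite linearB /= trmx_mul sD sX /riccati !mulmx1 !mul1mx addr0.
by rewrite !(mulmxBl, mulNmx, mulmxN); congr (row_mx _ _); mx_linear.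
Qed.

Lemma stable_eigenvector_in_graph A Q D X (v : 'cV[R]_(n + n)) (lam : R) :
  sym_mx Q -> sym_mx D -> stabilizing_solution A Q D X -> lam < 0 ->
  hamiltonian A Q D *m v = lam *: v ->
  exists2 x, v = col_mx 1%:M X *m x & (A - D *m X) *m x = lam *: x.
Proof.
move=> sQ sD stabX lam_neg Hv; have sX := stabilizing_solution_sym sQ sD stabX.
case: stabX => ricX hurX; rewrite -[v]vsubmxK in Hv *.
set x := usubmx v; set y := dsubmx v.
have y_Xx : y = X *m x.
  have Lv : row_mx (- X) 1%:M *m col_mx x y = y - X *m x.
    by rewrite mul_row_col mulNmx mul1mx addrC.
  have : (A - D *m X)^T *m (y - X *m x) + (y - X *m x) *m lam%:M = 0.
    rewrite -Lv mul_mx_scalar scalemxAr -Hv [_ *m (hamiltonian _ _ _ *m _)]mulmxA.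
    rewrite hamiltonian_left_graph // [riccati _ _ _ _]ricX row_mx0 addr0.
    by rewrite mulNmx -!mulmxA addrN.
  move/(hurwitz_sylvester_eq0 hurX (hurwitz_scalar lam_neg))/eqP.
  by rewrite subr_eq0 => /eqP.
exists x; first by rewrite y_Xx mul_col_mx mul1mx.
move: Hv; rewrite /hamiltonian mul_block_col scale_col_mx => /eq_col_mx[Hx _].
by rewrite mulmxBl -mulmxA -y_Xx -Hx mulNmx.
Qed.

End Riccati.

Section Symplectic.
Variables (R : realType) (n : nat).
Local Notation J := (Jmx R n).

Lemma trmx_Jmx : J^T = - J.
Proof.
by rewrite /Jmx tr_block_mx !trmx0 linearN /= trmx1 opp_block_mx !oppr0 opprK.
Qed.

Lemma mulmx_Jmx_Jmx : J *m J = - 1%:M.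
Proof.
rewrite /Jmx mulmx_block !(mul0mx, mulmx0, mulNmx, mulmxN, mul1mx, addr0, add0r).
by rewrite [in RHS]scalar_mx_block opp_block_mx oppr0.
Qed.

Lemma sym_Jmx_hamiltonian (A Q D : 'M[R]_n) : sym_mx Q -> sym_mx D ->
  sym_mx (J *m hamiltonian A Q D).
Proof.
move=> sQ sD; rewrite /sym_mx /Jmx /hamiltonian mulmx_block.
rewrite !(mul0mx, mul1mx, mulNmx, add0r, addr0, opprK) tr_block_mx.
by rewrite !linearN /= trmxK sQ sD.
Qed.

Lemma hamiltonian_of_sym_Jmx (M : 'M[R]_(n + n)) : sym_mx (J *m M) ->
  exists A Q D, [/\ sym_mx Q, sym_mx D & M = hamiltonian A Q D].
Proof.
rewrite /sym_mx -[M]submxK /Jmx mulmx_block.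
rewrite !(mul0mx, mul1mx, mulNmx, add0r, addr0) tr_block_mx !linearN /=.
case/eq_block_mx => sM3 M4 _ sM2.
exists (ulsubmx M), (- dlsubmx M), (- ursubmx M).
split; rewrite ?linearN /= ?sM3; first by [].
- by move/oppr_inj: sM2 => ->.
- by rewrite /hamiltonian -M4 !opprK.
Qed.

Lemma graph_isotropic (X : 'M[R]_n) : sym_mx X ->
  (col_mx 1%:M X)^T *m J *m col_mx 1%:M X = 0.
Proof.
move=> sX; rewrite tr_col_mx trmx1 sX /Jmx mul_row_block mul_row_col.
by rewrite !(mul0mx, mul1mx, mulmx0, mulmx1, mulmxN, add0r, addr0) addNr.
Qed.

Lemma sym_Jmx_update (v : 'cV[R]_(n + n)) :
  sym_mx (J *m (v *m ((J + 1%:M) *m v)^T - J *m v *m (J *m v)^T)).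
Proof.
rewrite /sym_mx mulmxBr !mulmxA mulmx_Jmx_Jmx mulmxDl !mul1mx mulNmx mul1mx.
move: (J *m v) => q; rewrite !(linearD, linearN) /= !trmx_mul !trmxK.
rewrite [(- v)^T]linearN /= mulmxN mulNmx.
by mx_linear.
Qed.

End Symplectic.

Lemma trmx_mul_enorm (R : realType) k (v : 'cV[R]_k) : v^T *m v = (enorm v ^+ 2)%:M.
Proof.
rewrite /enorm sqr_sqrtr; last by apply: sumr_ge0 => j _; apply: sqr_ge0.
apply/matrixP => i j; rewrite !ord1 !mxE eqxx mulr1n.
by apply: eq_bigr => l _; rewrite !mxE expr2.
Qed.

Lemma stabilizing_solution_update (R : realType) n (A Q D X At Qt Dt : 'M[R]_n)
    (x : 'cV_n) (p q : 'cV_(n + n)) (lam d : R) :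
  stabilizing_solution A Q D X -> (A - D *m X) *m x = lam *: x ->
  q^T *m col_mx 1%:M X = 0 -> p^T *m (col_mx 1%:M X *m x) = 1%:M ->
  lam + d < 0 ->
  hamiltonian At Qt Dt =
    hamiltonian A Q D + d *: (col_mx 1%:M X *m x *m p^T - q *m q^T) ->
  stabilizing_solution At Qt Dt X.
Proof.
set G := col_mx 1%:M X => -[ricX hurX] Xx qG pv lamd_neg Ht.
have HtG : hamiltonian At Qt Dt *m G = G *m (A - D *m X + d *: (x *m (p^T *m G))).
  rewrite Ht mulmxDl hamiltonian_graph [riccati _ _ _ _]ricX col_mx0 subr0.
  by rewrite -scalemxAl mulmxBl -!mulmxA qG mulmx0 subr0 [RHS]mulmxDr scalemxAr.
have [ricXt AtX] := graph_invariant_solution HtG.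
split=> //; rewrite AtX; apply: hurwitz_rank1_update hurX Xx _ lamd_neg.
by rewrite -mulmxA.
Qed.

Theorem theorem1 (R : realType) (n : nat) (A Q D P : 'M[R]_n)
  (symQ : sym_mx Q) (symD : sym_mx D)
  (hstab : stabilizable A D) (hdet : detectable Q A)
  (hP : unique_stabilizing_solution A Q D P)
  (lam : R) (v : 'cV[R]_(n + n))
  (hlam : lam < 0) (heig : hamiltonian A Q D *m v = lam *: v)
  (hunit : enorm v = 1) (dlam : R) :
  let p := (Jmx R n + 1%:M) *m v in
  let q := Jmx R n *m v in
  exists (At Qt Dt : 'M[R]_n),
    [/\ sym_mx Qt, sym_mx Dt,
        hamiltonian A Q D + dlam *: (v *m p^T - q *m q^T) = hamiltonian At Qt Dt
      & dlam < - lam -> unique_stabilizing_solution At Qt Dt P].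
Proof.
move=> p q; case: hP => stabP _.
have sP := stabilizing_solution_sym symQ symD stabP.
have [x vPx Px] := stable_eigenvector_in_graph symQ symD stabP hlam heig.
have qG : q^T *m col_mx 1%:M P = 0.
  rewrite /q vPx !trmx_mul trmx_Jmx mulmxN mulNmx -!mulmxA.
  by rewrite [_^T *m (Jmx R n *m _)]mulmxA graph_isotropic // mulmx0 oppr0.
have pv : p^T *m v = 1%:M.
  rewrite /p mulmxDl mul1mx -/q linearD /= mulmxDl {1}vPx mulmxA qG mul0mx.
  by rewrite add0r trmx_mul_enorm hunit expr1n.
have symJHt :
    sym_mx (Jmx R n *m (hamiltonian A Q D + dlam *: (v *m p^T - q *m q^T))).
  rewrite /sym_mx mulmxDr -scalemxAr linearD linearZ /=.
  by rewrite (sym_Jmx_hamiltonian A symQ symD) (sym_Jmx_update v).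
have [At [Qt [Dt [sQt sDt eHt]]]] := hamiltonian_of_sym_Jmx symJHt.
exists At, Qt, Dt; split=> // dlam_lt.
have stabPt : stabilizing_solution At Qt Dt P.
  apply: (stabilizing_solution_update (p := p) (d := dlam) stabP Px qG).
  - by rewrite -vPx.
  - by lra.
  - by rewrite -eHt -vPx.
by split=> // Y stabY; apply: stabilizing_solution_unique sQt sDt stabY stabPt.
Qed.
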